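(* Let $T\ge1$. For $t=0,1,\dots,T$ let $d_t\ge1$, let $M_t\in\mathbb{R}^{d_t\times d_t}$ be symmetric positive definite, and for $t=1,\dots,T$ let $A_t\in\mathbb{R}^{d_t\times d_{t-1}}$, $G_t\in\mathbb{R}^{K_t\times d_t}$, $R_t\in\mathbb{R}^{K_t\times K_t}$ symmetric positive definite, $r_t\in\mathbb{R}^{K_t}$, and define $\ell_t(u)=\frac12\|r_t-G_tu\|^2_{R_t^{-1}}$. Let $\eta_\delta>0$, $m_0\in\mathbb{R}^{d_0}$, and define recursively for $t=1,\dots,T$ $$m_t=\arg\min_{u\in\mathbb{R}^{d_t}}\Big\{\eta_\delta\,\ell_t(u)+\tfrac12\|u-A_tm_{t-1}\|^2_{M_t}\Big\}.$$ Assume there exists $\gamma\in[0,1)$ such that $A_t^\top M_tA_t\preceq\gamma M_{t-1}$ for all $t=1,\dots,T$. Then for any reference sequence $v_0\in\mathbb{R}^{d_0},\dots,v_T\in\mathbb{R}^{d_T}$, $$\sum_{t=1}^T\{\ell_t(m_t)-\ell_t(v_t)\}\le\frac{1}{2\eta_\delta}\|v_0-m_0\|^2_{M_0}+\frac{1}{2\eta_\delta(1-\gamma)}\sum_{t=1}^T\|v_t-A_tv_{t-1}\|^2_{M_t}.$$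
   Context: For a symmetric positive semidefinite matrix $M$, $\|v\|_M^2=v^\top Mv$; $\preceq$ is the Loewner order. In the application, $m_t$ is the posterior mean of a recursive Gaussian discrepancy update with pre-update covariance $P_t=M_t^{-1}$ and pre-update mean $A_tm_{t-1}$. *)

From mathcomp Require Import all_boot all_order all_algebra.
Set Implicit Arguments. Unset Strict Implicit. Unset Printing Implicit Defensive.
Import Order.TTheory GRing.Theory Num.Theory.
Local Open Scope ring_scope.

(* ||v||_M^2 = v^T M v, for column vectors *)
Definition qnorm (R : ringType) (n : nat) (M : 'M[R]_n) (v : 'cV[R]_n) : R :=
  (v^T *m M *m v) ord0 ord0.

Definition sym_mx (R : ringType) (n : nat) (M : 'M[R]_n) : Prop := M^T = M.

Definition spd (R : numDomainType) (n : nat) (M : 'M[R]_n) : Prop :=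
  sym_mx M /\ forall x : 'cV[R]_n, x != 0 -> 0 < qnorm M x.

Definition loewner_le (R : numDomainType) (n : nat) (A B : 'M[R]_n) : Prop :=
  forall v : 'cV[R]_n, qnorm A v <= qnorm B v.

Definition is_argmin (R : numDomainType) (T : Type) (f : T -> R) (x : T) : Prop :=
  forall y, f x <= f y.

Definition loss (R : fieldType) (K d : nat) (G : 'M[R]_(K, d)) (Rm : 'M[R]_K)
  (r : 'cV[R]_K) (u : 'cV[R]_d) : R :=
  2^-1 * qnorm (invmx Rm) (r - G *m u).

From mathcomp Require Import all_boot all_order all_algebra.
From mathcomp Require Import ring lra.
Set Implicit Arguments. Unset Strict Implicit. Unset Printing Implicit Defensive.
Import Order.TTheory GRing.Theory Num.Theory.
Local Open Scope ring_scope.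

(* Since [m_t] minimises a convex quadratic, comparing with the point [v_t]
   gives the three-point inequality
     eta l_t(m_t) + |m_t - A_t m_(t-1)|^2/2 + |v_t - m_t|^2/2
       <= eta l_t(v_t) + |v_t - A_t m_(t-1)|^2/2          (norms in M_t).
   Splitting v_t - A_t m_(t-1) = (v_t - A_t v_(t-1)) + A_t (v_(t-1) - m_(t-1))
   and using convexity of the squared norm with weight gamma together with
   A_t^T M_t A_t <= gamma M_(t-1), the last term is bounded by
   |v_t - A_t v_(t-1)|^2/(1-gamma) + |v_(t-1) - m_(t-1)|^2_(M_(t-1)), so the
   distances |v_t - m_t|^2_(M_t) telescope over t. *)

Section QuadraticForms.
Variable R : realFieldType.

Lemma quadratic_ge0_linear_coef_eq0 (L q : R) :
  (forall s, 0 <= s * L + s ^+ 2 * q) -> L = 0.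
Proof.
move=> ge0; have q_ge0 : 0 <= q.
  by have := ge0 1; have := ge0 (-1); rewrite !expr2; lra.
pose s := - L / (q + 1).
have L_eq : L = - s * (q + 1) by rewrite /s; field; rewrite gt_eqF ?ltr_wpDl.
have := ge0 s; rewrite L_eq.
have -> : s * (- s * (q + 1)) + s ^+ 2 * q = - s ^+ 2 by ring.
rewrite oppr_ge0 => s2_le0.
have /eqP : s ^+ 2 = 0 by apply/le_anti; rewrite s2_le0 sqr_ge0.
by rewrite sqrf_eq0 => /eqP->; rewrite oppr0 mul0r.
Qed.

Definition bform (n : nat) (M : 'M[R]_n) (x y : 'cV[R]_n) : R :=
  (x^T *m M *m y) ord0 ord0.

Lemma bformDl n (M : 'M[R]_n) x1 x2 y :
  bform M (x1 + x2) y = bform M x1 y + bform M x2 y.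
Proof. by rewrite /bform linearD /= !mulmxDl mxE. Qed.

Lemma bformDr n (M : 'M[R]_n) x y1 y2 :
  bform M x (y1 + y2) = bform M x y1 + bform M x y2.
Proof. by rewrite /bform mulmxDr mxE. Qed.

Lemma bformZl n (M : 'M[R]_n) a x y : bform M (a *: x) y = a * bform M x y.
Proof. by rewrite /bform linearZ /= -!scalemxAl mxE. Qed.

Lemma bformZr n (M : 'M[R]_n) a x y : bform M x (a *: y) = a * bform M x y.
Proof. by rewrite /bform -scalemxAr mxE. Qed.

Lemma bformC n (M : 'M[R]_n) x y : sym_mx M -> bform M x y = bform M y x.
Proof.
move=> symM; rewrite /bform -[in LHS](trmxK (_ *m _ *m _)) mxE.
by rewrite !trmx_mul trmxK symM mulmxA.
Qed.

Lemma qnormE n (M : 'M[R]_n) x : qnorm M x = bform M x x.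
Proof. by []. Qed.

Lemma qnorm_lincomb n (M : 'M[R]_n) a b x y :
  qnorm M (a *: x + b *: y) =
  a ^+ 2 * qnorm M x + a * b * (bform M x y + bform M y x) + b ^+ 2 * qnorm M y.
Proof. by rewrite !qnormE !(bformDl, bformDr, bformZl, bformZr); ring. Qed.

Lemma qnormD_line n (M : 'M[R]_n) s x h :
  qnorm M (x + s *: h) =
  qnorm M x + s * (bform M x h + bform M h x) + s ^+ 2 * qnorm M h.
Proof. by have := qnorm_lincomb M 1 s x h; rewrite scale1r expr1n !mul1r. Qed.

Lemma qnorm0 n (M : 'M[R]_n) : qnorm M 0 = 0.
Proof. by rewrite /qnorm mulmx0 mxE. Qed.

Lemma qnorm_scalemx n (M : 'M[R]_n) g x : qnorm (g *: M) x = g * qnorm M x.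
Proof. by rewrite /qnorm -scalemxAr -scalemxAl mxE. Qed.

Lemma qnorm_mulmx n k (M : 'M[R]_n) (A : 'M[R]_(n, k)) e :
  qnorm M (A *m e) = qnorm (A^T *m M *m A) e.
Proof. by rewrite /qnorm trmx_mul !mulmxA. Qed.

Lemma spd_qnorm_ge0 n (M : 'M[R]_n) x : spd M -> 0 <= qnorm M x.
Proof.
move=> [_ posM]; have [->|x_neq0] := eqVneq x 0; first by rewrite qnorm0.
exact/ltW/posM.
Qed.

Lemma spd_qnorm_eq0 n (M : 'M[R]_n) x : spd M -> qnorm M x <= 0 -> x = 0.
Proof.
by move=> [_ posM] le0; apply/eqP; apply: contraTT le0 => /posM; rewrite -ltNge.
Qed.

(* When [M] is singular, [invmx M = M] and the claim is [spd_qnorm_ge0]. *)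
Lemma spd_qnorm_invmx_ge0 n (M : 'M[R]_n) x : spd M -> 0 <= qnorm (invmx M) x.
Proof.
move=> spdM; have [unitM|/invmx_out->] := boolP (M \in unitmx); last first.
  exact: spd_qnorm_ge0.
rewrite -[x](mulKVmx unitM) qnorm_mulmx (proj1 spdM) -(mulmxA M).
by rewrite mulVmx // mulmx1; apply: spd_qnorm_ge0.
Qed.

(* Convexity of the squared norm, in a form valid for every weight [g]:
   the defect is [qnorm M ((1 - g) *: y - g *: w) >= 0]. *)
Lemma qnormD_convex n (M : 'M[R]_n) g w y : spd M ->
  g * (1 - g) * qnorm M (w + y) <= g * qnorm M w + (1 - g) * qnorm M y.
Proof.
move=> spdM; have := spd_qnorm_ge0 ((1 - g) *: y + (- g) *: w) spdM.
rewrite qnorm_lincomb -[w + y]scale1r scalerDr qnorm_lincomb.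
rewrite (bformC y w (proj1 spdM)) => ge0; rewrite -subr_ge0.
by apply: le_trans ge0 _; rewrite le_eqVlt; apply/orP; left; apply/eqP; ring.
Qed.

Lemma qnormD_contract n k (M : 'M[R]_n) (Mp : 'M[R]_k) (A : 'M[R]_(n, k)) g
    (w : 'cV[R]_n) (e : 'cV[R]_k) :
  spd M -> spd Mp -> 0 <= g -> g < 1 ->
  loewner_le (A^T *m M *m A) (g *: Mp) ->
  (1 - g) * qnorm M (w + A *m e) <= qnorm M w + (1 - g) * qnorm Mp e.
Proof.
move=> spdM spdMp g_ge0 g_lt1 contrA.
have Ae_le : qnorm M (A *m e) <= g * qnorm Mp e.
  by rewrite qnorm_mulmx -qnorm_scalemx; apply: contrA.
have Mp_e := spd_qnorm_ge0 e spdMp.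
have [g0|g_neq0] := eqVneq g 0.
  move: Ae_le; rewrite g0 mul0r subr0 !mul1r => /(spd_qnorm_eq0 spdM)->.
  by rewrite addr0 lerDl.
have g_gt0 : 0 < g by rewrite lt_def g_neq0.
rewrite -(ler_pM2l g_gt0) mulrA [in X in _ <= X]mulrDr.
apply: le_trans (qnormD_convex g w (A *m e) spdM) _.
by rewrite lerD2l mulrCA ler_wpM2l // subr_ge0 ltW.
Qed.

End QuadraticForms.

Section ProximalStep.
Variable R : realFieldType.

Lemma loss_line k n (G : 'M[R]_(k, n)) (N : 'M[R]_k) p s u h :
  loss G N p (u + s *: h) =
  loss G N p u
  - s * (2^-1 * (bform (invmx N) (p - G *m u) (G *m h)
                 + bform (invmx N) (G *m h) (p - G *m u)))
  + s ^+ 2 * (2^-1 * qnorm (invmx N) (G *m h)).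
Proof.
rewrite /loss.
have -> : p - G *m (u + s *: h) = p - G *m u + (- s) *: (G *m h).
  by rewrite mulmxDr -scalemxAr scaleNr opprD addrA.
by rewrite qnormD_line sqrrN; ring.
Qed.

Lemma argmin_three_point k n (G : 'M[R]_(k, n)) (N : 'M[R]_k) (p : 'cV[R]_k)
    (M : 'M[R]_n) (a m v : 'cV[R]_n) eta :
  0 <= eta -> spd N ->
  is_argmin (fun u => eta * loss G N p u + 2^-1 * qnorm M (u - a)) m ->
  eta * loss G N p m + 2^-1 * qnorm M (m - a) + 2^-1 * qnorm M (v - m)
  <= eta * loss G N p v + 2^-1 * qnorm M (v - a).
Proof.
move=> eta_ge0 spdN minm; set F := fun u => _ in minm; set h := v - m.
pose L := - eta * (2^-1 * (bform (invmx N) (p - G *m m) (G *m h)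
                           + bform (invmx N) (G *m h) (p - G *m m)))
          + 2^-1 * (bform M (m - a) h + bform M h (m - a)).
pose q := eta * (2^-1 * qnorm (invmx N) (G *m h)) + 2^-1 * qnorm M h.
have F_line s : F (m + s *: h) = F m + s * L + s ^+ 2 * q.
  rewrite /F; have -> : m + s *: h - a = m - a + s *: h by rewrite addrAC.
  by rewrite loss_line qnormD_line /L /q; ring.
have L0 : L = 0.
  apply: quadratic_ge0_linear_coef_eq0 (q) _ => s.
  by have := minm (m + s *: h); rewrite F_line -addrA lerDl.
have := F_line 1; rewrite L0 mulr0 addr0 expr1n mul1r scale1r /h addrC subrK.
rewrite /F => ->; rewrite lerD2l /q lerDr.
by rewrite mulr_ge0 ?mulr_ge0 ?invr_ge0 ?ler0n ?spd_qnorm_invmx_ge0.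
Qed.

Lemma regret_step k n n' (G : 'M[R]_(k, n)) (N : 'M[R]_k) (p : 'cV[R]_k)
    (M : 'M[R]_n) (Mp : 'M[R]_n') (A : 'M[R]_(n, n')) eta g
    (m v : 'cV[R]_n) (mp vp : 'cV[R]_n') :
  0 <= eta -> spd N -> spd M -> spd Mp -> 0 <= g -> g < 1 ->
  loewner_le (A^T *m M *m A) (g *: Mp) ->
  is_argmin (fun u => eta * loss G N p u + 2^-1 * qnorm M (u - A *m mp)) m ->
  eta * (1 - g) * (loss G N p m - loss G N p v)
  <= 2^-1 * qnorm M (v - A *m vp)
     + 2^-1 * (1 - g) * (qnorm Mp (vp - mp) - qnorm M (v - m)).
Proof.
move=> eta_ge0 spdN spdM spdMp g_ge0 g_lt1 contrA minm.
have g1_ge0 : 0 <= 1 - g by rewrite subr_ge0 ltW.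
have := argmin_three_point v eta_ge0 spdN minm => /(ler_wpM2l g1_ge0) three_pt.
have := qnormD_contract (v - A *m vp) (vp - mp) spdM spdMp g_ge0 g_lt1 contrA.
rewrite mulmxBr addrA subrK => contr.
have := mulr_ge0 g1_ge0 (spd_qnorm_ge0 (m - A *m mp) spdM).
by move: three_pt contr; lra.
Qed.

End ProximalStep.

Theorem theorem1 (R : realFieldType) (T : nat) (d K : nat -> nat)
  (M : forall t, 'M[R]_(d t))
  (A : forall t, 'M[R]_(d t, d t.-1))
  (G : forall t, 'M[R]_(K t, d t))
  (Rm : forall t, 'M[R]_(K t))
  (r : forall t, 'cV[R]_(K t))
  (eta gamma : R)
  (m : forall t, 'cV[R]_(d t))
  (v : forall t, 'cV[R]_(d t)) :
  (1 <= T)%N ->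
  (forall t, (t <= T)%N -> (1 <= d t)%N) ->
  (forall t, (t <= T)%N -> spd (M t)) ->
  (forall t, (1 <= t <= T)%N -> spd (Rm t)) ->
  0 < eta ->
  (forall t, (1 <= t <= T)%N ->
     is_argmin (fun u : 'cV[R]_(d t) =>
        eta * loss (G t) (Rm t) (r t) u
        + 2^-1 * qnorm (M t) (u - A t *m m t.-1)) (m t)) ->
  0 <= gamma -> gamma < 1 ->
  (forall t, (1 <= t <= T)%N ->
     loewner_le ((A t)^T *m M t *m A t) (gamma *: M t.-1)) ->
  \sum_(1 <= t < T.+1)
      (loss (G t) (Rm t) (r t) (m t) - loss (G t) (Rm t) (r t) (v t))
  <= (2 * eta)^-1 * qnorm (M 0%N) (v 0%N - m 0%N)
     + (2 * eta * (1 - gamma))^-1 *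
       \sum_(1 <= t < T.+1) qnorm (M t) (v t - A t *m v t.-1).
Proof.
move=> _ _ spdM spdRm eta_gt0 minm gamma_ge0 gamma_lt1 contrA.
set regret := \sum_(1 <= t < T.+1) _.
set drift := \sum_(1 <= t < T.+1) _.
pose E t := qnorm (M t) (v t - m t).
have tele : \sum_(1 <= t < T.+1) (E t.-1 - E t) = E 0%N - E T.
  rewrite big_add1 /= -[RHS]opprB -telescope_sumr // -sumrN.
  by apply: eq_bigr => t _; rewrite opprB.
have regret_le : eta * (1 - gamma) * regret
                  <= 2^-1 * drift + 2^-1 * (1 - gamma) * (E 0%N - E T).
  rewrite mulr_sumr -tele mulr_sumr /drift mulr_sumr -big_split /=.
  apply: ler_sum_nat => t /andP[t_ge1]; rewrite ltnS => t_le.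
  have tT : (1 <= t <= T)%N by rewrite t_ge1.
  have spdMp : spd (M t.-1) by apply/spdM/(leq_trans (leq_pred t)).
  exact: regret_step (ltW eta_gt0) (spdRm t tT) (spdM t t_le) spdMp
           gamma_ge0 gamma_lt1 (contrA t tT) (minm t tT).
have ET_ge0 : 0 <= E T by apply/spd_qnorm_ge0/spdM.
have gamma1_gt0 : 0 < 1 - gamma by rewrite subr_gt0.
rewrite -(ler_pM2l (mulr_gt0 eta_gt0 gamma1_gt0)).
apply: (le_trans regret_le).
have -> : eta * (1 - gamma) * ((2 * eta)^-1 * E 0%N
                                + (2 * eta * (1 - gamma))^-1 * drift)
          = 2^-1 * drift + 2^-1 * (1 - gamma) * E 0%N.
  by field; rewrite !gt_eqF.
by have := mulr_ge0 (ltW gamma1_gt0) ET_ge0; lra.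
Qed.
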